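(* Let $A\in\mathrm{SL}(n,\mathbb{C})$ be such that its characteristic polynomial $\chi_A(x)=x^n-c_{n-1}x^{n-1}+c_{n-2}x^{n-2}-\cdots+(-1)^n$ is $c$-reciprocal. Let $R(\chi_A,\chi_A')$ denote the resultant of $\chi_A$ and its derivative $\chi_A'$. Then: (i) $A$ is regular $2m$-loxodromic for some integer $m\ge 0$ if and only if $R(\chi_A,\chi_A')>0$; (ii) $A$ is regular $(2m+1)$-loxodromic for some integer $m\ge 0$ if and only if $R(\chi_A,\chi_A')<0$; (iii) $A$ is not regular (i.e. has a repeated eigenvalue) if and only if $R(\chi_A,\chi_A')=0$.
   Context: A polynomial $f$ with nonzero roots is $c$-reciprocal if for every root $\lambda$, $\overline{\lambda}^{-1}$ is also a root with the same multiplicity. A matrix in $\mathrm{SL}(n,\mathbb{C})$ is regular if its characteristic polynomial has no repeated roots. A matrix $g\in\mathrm{SL}(n,\mathbb{C})$ is $k$-loxodromic ($k\ge 0$) if it has $k$ pairs of eigenvalues $r_je^{i\theta_j}, r_j^{-1}e^{i\theta_j}$ with $r_j>0$, $r_j\neq 1$, $j=1,\dots,k$, and all other eigenvalues have modulus one ($0$-loxodromic means all eigenvalues have modulus one). ''Regular $k$-loxodromic'' means regular and $k$-loxodromic. *)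

From HB Require Import structures.
From mathcomp Require Import all_boot all_order all_algebra.
From mathcomp Require Import reals complex.
Set Implicit Arguments. Unset Strict Implicit. Unset Printing Implicit Defensive.
Import Order.TTheory GRing.Theory Num.Theory.
Local Open Scope ring_scope.

Definition in_SL (C : numClosedFieldType) (n : nat) (A : 'M[C]_n) : Prop :=
  \det A = 1.

Definition c_reciprocal (C : numClosedFieldType) (f : {poly C}) : Prop :=
  f != 0 /\
  forall lambda : C, root f lambda ->
    lambda != 0 /\ root f ((lambda^*)^-1) /\ mup ((lambda^*)^-1) f = mup lambda f.

Definition regular (C : numClosedFieldType) (n : nat) (A : 'M[C]_n) : Prop :=
  forall lambda : C, (mup lambda (char_poly A) <= 1)%N.

(* k-loxodromic: the eigenvalues (counted with multiplicity, i.e. the roots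
   of the characteristic polynomial) consist of k pairs
   r_j e^{i theta_j}, r_j^-1 e^{i theta_j}  (r_j > 0, r_j <> 1), where
   w_j = e^{i theta_j} is any complex number of modulus one, together with
   a list s of eigenvalues all of modulus one. *)
Definition k_loxodromic (C : numClosedFieldType) (n : nat) (A : 'M[C]_n)
    (k : nat) : Prop :=
  exists (r w : 'I_k -> C) (s : seq C),
    (forall j, 0 < r j /\ r j != 1 /\ `|w j| = 1) /\
    (forall u, u \in s -> `|u| = 1) /\
    char_poly A =
      (\prod_(j < k) (('X - (r j * w j)%:P) * ('X - ((r j)^-1 * w j)%:P)))
      * \prod_(u <- s) ('X - u%:P).

Definition regular_k_loxodromic (C : numClosedFieldType) (n : nat)
    (A : 'M[C]_n) (k : nat) : Prop :=
  regular A /\ k_loxodromic A k.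

(* Write chi_A = prod_i (X - z_i).  For distinct nonzero roots, multiplying the
   Sylvester matrix by Vandermonde columns at the roots gives
   R(chi, chi') = prod_i chi'(z_i) = prod_(i<j) (z_i - z_j) (z_j - z_i); since
   prod_i z_i = det A = 1, this equals prod_(i<j) h(z_i, z_j) with
   h(x, y) = 2 - x/y - y/x.  The involution sigma(z) = (conj z)^-1 permutes the
   roots and h(sigma x, sigma y) = conj (h(x, y)), so the roots split into pairs
   {z, sigma z} with |z| <> 1 and unimodular fixed points.  The factors linking
   two different sigma-orbits multiply to a nonnegative real (they come in
   conjugate pairs, and h(u, v) = |u - v|^2 for unimodular u, v), while each pair
   contributes h(z, sigma z) = -(|z| - |z|^-1)^2 < 0.  Hence the resultant of a
   regular k-loxodromic A has sign (-1)^k, and it vanishes exactly when chi_A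
   has a repeated root. *)
From HB Require Import structures.
From mathcomp Require Import all_boot all_order all_algebra.
From mathcomp Require Import reals complex separable ring zify.
Set Implicit Arguments. Unset Strict Implicit. Unset Printing Implicit Defensive.
Import Order.TTheory GRing.Theory Num.Theory.
Local Open Scope ring_scope.

Local Notation prodXsubC s := (\prod_(z <- s) ('X - z%:P)).

Lemma horner_shift_wide (R : comNzRingType) (r : {poly R}) (i n : nat) (x : R) :
  (size r + i <= n)%N ->
  \sum_(l < n) (r`_(l - i) *+ (i <= l)) * x ^+ l = (r * 'X^i).[x].
Proof.
move=> le_ri_n; rewrite (@horner_coef_wide _ n); last first.
  by apply: leq_trans (size_polyMleq _ _) _; rewrite size_polyXn addnS.
by apply: eq_bigr => l _; rewrite coefMXn; case: ltnP; rewrite ?mulr0n ?mulr1n.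
Qed.

Lemma Sylvester_mx_Vandermonde (R : comNzRingType) (p q : {poly R}) m
    (a : 'rV[R]_m) :
  Sylvester_mx p q *m Vandermonde _ a =
  col_mx (\matrix_(i < (size q).-1, j < m) (p * 'X^i).[a 0 j])
         (\matrix_(i < (size p).-1, j < m) (q * 'X^i).[a 0 j]).
Proof.
apply/matrixP => i j; rewrite !mxE.
under eq_bigr do rewrite Sylvester_mxE !mxE.
case: splitP => k _; rewrite mxE horner_shift_wide //.
- by have := ltn_ord k; case: (size p); lia.
- by have := ltn_ord k; case: (size q); lia.
Qed.

Lemma det_ulsubmx_Sylvester_mx (R : comNzRingType) (p q : {poly R}) :
  \det (ulsubmx (Sylvester_mx p q)) = p`_0 ^+ (size q).-1.
Proof.
have split_lshift i : split (lshift (size p).-1 i) = inl i := unsplitK (inl _ i).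
move: (@Sylvester_mxE _ p q); move: (Sylvester_mx p q) => S SE.
rewrite -det_tr det_trig; last first.
  by apply/is_trig_mxP => i j lt_ij; rewrite !mxE SE split_lshift /= leqNgt lt_ij.
rewrite -[in RHS](card_ord (size q).-1) -prodr_const.
by apply: eq_bigr => i _; rewrite !mxE SE split_lshift /= subnn leqnn.
Qed.

Lemma det_Vandermonde_neq0 (F : fieldType) n (a : 'rV[F]_n) :
  injective (a 0) -> \det (Vandermonde n a) != 0.
Proof.
move=> inj_a; rewrite det_Vandermonde; apply/prodf_neq0 => i _.
apply/prodf_neq0 => j lt_ij; rewrite subr_eq0; apply/eqP => /inj_a eq_ji.
by rewrite eq_ji ltnn in lt_ij.
Qed.

Lemma det_Vandermonde_mul_diag (R : comNzRingType) n (a : 'rV[R]_n)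
    (d : 'I_n -> R) :
  \det (\matrix_(i < n, j < n) (a 0 j ^+ i * d j)) =
  \det (Vandermonde n a) * \prod_j d j.
Proof.
have -> : \prod_j d j = \det (diag_mx (\row_j d j)).
  by rewrite det_diag; apply: eq_bigr => j _; rewrite mxE.
by rewrite -det_mulmx mul_mx_diag; congr (\det _); apply/matrixP => i j; rewrite !mxE.
Qed.

Lemma resultant_prod_XsubC (F : fieldType) (s : seq F) (q : {poly F}) :
  uniq s -> 0 \notin s ->
  resultant (prodXsubC s) q = (-1) ^+ (size s * (size q).-1) * \prod_(z <- s) q.[z].
Proof.
move=> uniq_s s_neq0; set p := prodXsubC s.
have size_p : (size p).-1 = size s by rewrite size_prod_XsubC.
set dq := (size q).-1; set dp := (size p).-1; set S := Sylvester_mx p q.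
pose a : 'rV_dp := \row_j s`_j.
have s_a j : a 0 j \in s by rewrite mxE mem_nth // -size_p.
have inj_a : injective (a 0).
  by move=> i j; rewrite !mxE => /eqP; rewrite nth_uniq -?size_p // => /eqP /val_inj.
have p_root j : p.[a 0 j] = 0 by apply/rootP; rewrite root_prod_XsubC s_a.
have prod_a (G : F -> F) : \prod_(z <- s) G z = \prod_j G (a 0 j).
  by rewrite (big_nth 0) -size_p big_mkord; apply: eq_bigr => j _; rewrite mxE.
(* Right-multiplying by [M] kills the rows of [S] built from [p] on the
   Vandermonde columns of the roots, leaving a block triangular matrix. *)
pose M := row_mx (col_mx (1%:M : 'M_dq) 0) (Vandermonde (dq + dp) a).
have SM : S *m M =
    block_mx (ulsubmx S) 0 (dlsubmx S) (\matrix_(i < dp, j < dp) (q * 'X^i).[a 0 j]).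
  rewrite mul_mx_row Sylvester_mx_Vandermonde -[S in S *m col_mx _ _]hsubmxK.
  rewrite mul_row_col mulmx1 mulmx0 addr0 block_mxEh; congr row_mx.
    by rewrite -[S in lsubmx S]submxK block_mxEh row_mxKl.
  congr col_mx; apply/matrixP => i j.
  by rewrite mxE [RHS]mxE hornerM p_root mul0r.
have det_M : \det M = \det (Vandermonde dp a) * \prod_j a 0 j ^+ dq.
  rewrite /M -[Vandermonde _ _]vsubmxK -block_mxEh det_ublock det1 mul1r.
  rewrite -det_Vandermonde_mul_diag; congr (\det _); apply/matrixP => i j.
  by rewrite !mxE exprD mulrC.
have det_q : \det (\matrix_(i < dp, j < dp) (q * 'X^i).[a 0 j]) =
    \det (Vandermonde dp a) * \prod_j q.[a 0 j].
  rewrite -det_Vandermonde_mul_diag; congr (\det _); apply/matrixP => i j.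
  by rewrite !mxE hornerM hornerXn mulrC.
have := det_mulmx S M; rewrite SM det_lblock det_ulsubmx_Sylvester_mx det_q det_M.
rewrite coef0_prod_XsubC prod_a exprMn -exprM -prodrXl => det_SM.
have det_M_neq0 : \det (Vandermonde dp a) * \prod_j a 0 j ^+ dq != 0.
  rewrite mulf_neq0 ?det_Vandermonde_neq0 //; apply/prodf_neq0 => j _.
  by rewrite expf_neq0 //; apply: contraNneq s_neq0 => <-; apply: s_a.
by apply: (mulIf det_M_neq0); rewrite /resultant -/S -det_SM prod_a -size_p; ring.
Qed.

Lemma size_deriv (R : numDomainType) (p : {poly R}) : size p^`() = (size p).-1.
Proof.
have [le_p1 | lt_1p] := leqP (size p) 1.
  by rewrite [p]size1_polyC // derivC size_poly0 size_polyC; case: (_ != 0).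
rewrite /deriv size_poly_eq // -subn2 -subSn // subn2 mulrn_eq0 /=.
rewrite -lead_coefE lead_coef_eq0 -size_poly_eq0 negb_or.
by case: (size p) lt_1p => [|[|k]].
Qed.

Lemma resultant_deriv_prod_XsubC_eq0 (R : idomainType) (s : seq R) :
  (resultant (prodXsubC s) (prodXsubC s)^`() == 0) = ~~ uniq s.
Proof.
rewrite resultant_eq0 -separable_prod_XsubC separable_poly.unlock coprimep_def.
rewrite ltn_neqAle eq_sym size_poly_gt0 gcdp_eq0 negb_and.
by rewrite monic_neq0 ?monic_prod_XsubC ?andbT.
Qed.

Section DerivAtRoots.
Variable F : fieldType.
Implicit Types (s : seq F) (x y : F).

Definition deriv_at_roots s := \prod_(x <- s) (prodXsubC s)^`().[x].

Lemma deriv_at_roots_cons x s :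
  deriv_at_roots (x :: s) = deriv_at_roots s * \prod_(y <- s) ((x - y) * (y - x)).
Proof.
rewrite /deriv_at_roots !big_cons derivM derivXsubC mul1r.
set q := prodXsubC s.
have q_root y : y \in s -> q.[y] = 0 by move=> s_y; apply/rootP; rewrite root_prod_XsubC.
rewrite hornerD hornerM hornerXsubC subrr mul0r addr0.
rewrite (eq_big_seq (fun y => (y - x) * q^`().[y])); last first.
  by move=> y s_y; rewrite hornerD hornerM hornerXsubC q_root ?add0r.
rewrite big_split /= [q.[x]]horner_prod.
under eq_bigr do rewrite hornerXsubC.
by rewrite [\prod_(y <- s) ((x - y) * _)]big_split /=; ring.
Qed.

Definition pair_disc x y := 2 - x / y - y / x.

Fixpoint norm_disc s :=
  if s is x :: s' then norm_disc s' * \prod_(y <- s') pair_disc x y else 1.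

Lemma deriv_at_roots_norm_disc s : 0 \notin s ->
  deriv_at_roots s * \prod_(z <- s) z = (\prod_(z <- s) z) ^+ size s * norm_disc s.
Proof.
elim: s => [|x s IH]; first by rewrite /deriv_at_roots !big_nil !mulr1.
rewrite in_cons negb_or eq_sym => /andP [x_neq0 s_neq0].
have pair_discE : \prod_(y <- s) ((x - y) * (y - x)) =
    x ^+ size s * \prod_(y <- s) y * \prod_(y <- s) pair_disc x y.
  rewrite -[size s]count_predT -iter_mulr_1 -big_const_seq -!big_split /=.
  apply: eq_big_seq => y s_y.
  have y_neq0 : y != 0 by apply: contraNneq s_neq0 => <-.
  by rewrite /pair_disc; field; rewrite x_neq0 y_neq0.
rewrite deriv_at_roots_cons big_cons /= pair_discE.
set P := \prod_(y <- s) y; set D := \prod_(y <- s) pair_disc x y.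
transitivity ((deriv_at_roots s * P) * (x ^+ size s * D * x * P)); first by ring.
by rewrite IH // exprS exprMn; ring.
Qed.

End DerivAtRoots.

Lemma resultant_deriv_prod_XsubC (F : numFieldType) (s : seq F) :
  uniq s -> 0 \notin s ->
  resultant (prodXsubC s) (prodXsubC s)^`() = deriv_at_roots s.
Proof.
move=> uniq_s s_neq0; rewrite resultant_prod_XsubC // size_deriv size_prod_XsubC /=.
by rewrite -signr_odd oddM; case: (size s) => [|n] /=; rewrite ?andNb /= expr0 mul1r.
Qed.

Section ConjugateReciprocal.
Variable C : numClosedFieldType.
Implicit Types (x y z u v : C) (s Z U : seq C).

Definition crecip z := (z^*)^-1.

Lemma crecipE z : crecip z = `|z| ^- 2 * z.
Proof. by rewrite /crecip invC_norm norm_conjC conjCK. Qed.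

Lemma crecipK : involutive crecip.
Proof. by move=> z; rewrite /crecip fmorphV /= conjCK invrK. Qed.

Lemma norm_crecip z : `|crecip z| = `|z|^-1.
Proof. by rewrite /crecip normfV norm_conjC. Qed.

Lemma crecip_unit u : `|u| = 1 -> crecip u = u.
Proof. by move=> u1; rewrite crecipE u1 expr1n invr1 mul1r. Qed.

Lemma pair_disc_crecip x y : pair_disc (crecip x) (crecip y) = (pair_disc x y)^*.
Proof. by rewrite /pair_disc /crecip !rmorphB !rmorphM !fmorphV /= rmorph_nat !invrK; ring. Qed.

Lemma pair_disc_unit_ge0 u v : `|u| = 1 -> `|v| = 1 -> 0 <= pair_disc u v.
Proof.
move=> u1 v1; have unit_neq0 (w : C) : `|w| = 1 -> w != 0.
  by move=> w1; rewrite -normr_eq0 w1 oner_neq0.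
have conj_unit (w : C) : `|w| = 1 -> w^* = w^-1.
  by move=> w1; rewrite -[w^*]invrK -/(crecip w) crecip_unit.
suff -> : pair_disc u v = (u - v) * (u - v)^* by apply: mul_conjC_ge0.
rewrite rmorphB /= !conj_unit // /pair_disc; field.
by rewrite !unit_neq0.
Qed.

Lemma pair_disc_crecip_le0 z : z != 0 -> pair_disc z (crecip z) <= 0.
Proof.
move=> z_neq0; suff -> : pair_disc z (crecip z) = - (`|z| - `|z|^-1) ^+ 2.
  by rewrite oppr_le0 real_exprn_even_ge0 // realB ?realV ?normr_real.
rewrite crecipE /pair_disc; have : `|z| != 0 by rewrite normr_eq0.
by move: `|z| => a a_neq0; field; rewrite a_neq0 z_neq0.
Qed.

Fixpoint crecip_pairs Z :=
  if Z is z :: Z' then z :: crecip z :: crecip_pairs Z' else [::].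

Lemma prod_XsubC_crecip_pairs Z :
  prodXsubC (crecip_pairs Z) = \prod_(z <- Z) (('X - z%:P) * ('X - (crecip z)%:P)).
Proof. by elim: Z => [|z Z IH]; rewrite ?big_nil //= !big_cons IH mulrA. Qed.

Lemma perm_crecip_pairs Z : perm_eq (crecip_pairs Z) (Z ++ map crecip Z).
Proof.
elim: Z => [|z Z IH] //=; rewrite perm_cons.
by rewrite -(perm_cons (crecip z)) in IH; rewrite (permPl IH) -cat1s perm_catCA.
Qed.

Lemma prod_crecip_pairs_ge0 (g : C -> C) Z U :
  (forall y, g (crecip y) = (g y)^*) -> (forall u, u \in U -> 0 <= g u) ->
  0 <= \prod_(y <- crecip_pairs Z ++ U) g y.
Proof.
move=> g_crecip g_U; rewrite big_cat mulr_ge0 //; last first.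
  by rewrite big_seq; apply: prodr_ge0.
elim: Z => [|z Z IH]; first by rewrite big_nil.
by rewrite /= !big_cons mulrA mulr_ge0 // g_crecip mul_conjC_ge0.
Qed.

Lemma norm_disc_crecip_pairs_sign Z U :
  0 \notin Z -> (forall u, u \in U -> `|u| = 1) ->
  0 <= (-1) ^+ size Z * norm_disc (crecip_pairs Z ++ U).
Proof.
move=> Z_neq0 U1; elim: Z Z_neq0 => [_ | z Z IH].
  rewrite mul1r; elim: U U1 => [|u U IHU] U1 //=.
  have u1 : `|u| = 1 by apply: U1; rewrite mem_head.
  have {}U1 v : v \in U -> `|v| = 1 by move=> U_v; apply: U1; rewrite inE U_v orbT.
  rewrite mulr_ge0 ?IHU // big_seq prodr_ge0 // => v U_v.
  exact: pair_disc_unit_ge0 (U1 v U_v).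
rewrite in_cons negb_or eq_sym => /andP [z_neq0 Z_neq0] /=.
set L := crecip_pairs Z ++ U; rewrite big_cons.
have -> : (-1) ^+ (size Z).+1 * (norm_disc L * \prod_(y <- L) pair_disc (crecip z) y *
      (pair_disc z (crecip z) * \prod_(y <- L) pair_disc z y)) =
    (-1) ^+ size Z * norm_disc L * - pair_disc z (crecip z) *
      \prod_(y <- L) (pair_disc z y * pair_disc (crecip z) y).
  by rewrite big_split /= exprS; ring.
apply: mulr_ge0; first by rewrite mulr_ge0 ?IH // oppr_ge0 pair_disc_crecip_le0.
apply: prod_crecip_pairs_ge0 => [y | u U_u].
  by rewrite rmorphM /= -!pair_disc_crecip crecipK mulrC.
by rewrite -{2}(crecip_unit (U1 u U_u)) pair_disc_crecip mul_conjC_ge0.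
Qed.

Lemma crecip_closed_decomposition s :
  uniq s -> 0 \notin s -> (forall z, z \in s -> crecip z \in s) ->
  exists Z U, [/\ perm_eq s (crecip_pairs Z ++ U),
    forall z, z \in Z -> 1 < `|z| & forall u, u \in U -> `|u| = 1].
Proof.
move=> uniq_s s_neq0 s_crecip.
set Z := [seq z <- s | 1 < `|z|]; set U := [seq z <- s | `|z| == 1].
exists Z, U; split; last 2 first.
- by move=> z; rewrite mem_filter => /andP [].
- by move=> u; rewrite mem_filter => /andP [/eqP].
have inj_crecip : injective crecip := can_inj crecipK.
have perm_lt1 : perm_eq [seq z <- s | `|z| < 1] (map crecip Z).
  apply: uniq_perm; first exact: filter_uniq.
    by rewrite (map_inj_uniq inj_crecip) filter_uniq.
  move=> z; rewrite -[z in RHS]crecipK mem_map // !mem_filter norm_crecip andbC.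
  have -> : (crecip z \in s) = (z \in s).
    by apply/idP/idP => /s_crecip; rewrite ?crecipK.
  have [s_z | _] := boolP (z \in s); last by rewrite andbF.
  have z_neq0 : z != 0 by apply: contraNneq s_neq0 => <-.
  by rewrite andbT invf_gt1 // normr_gt0.
have perm_gt1 := perm_filterC (fun z => 1 < `|z|) s.
have perm_eq1 := perm_filterC (fun z => `|z| == 1) [seq z <- s | ~~ (1 < `|z|)].
rewrite -!filter_predI in perm_eq1.
have filter_eq1 :
    [seq z <- s | predI (fun z => `|z| == 1) (fun z => ~~ (1 < `|z|)) z] = U.
  by apply: eq_filter => z /=; case: eqP => // ->; rewrite ltxx.
have filter_lt1 :
    [seq z <- s | predI (predC (fun z => `|z| == 1)) (fun z => ~~ (1 < `|z|)) z] =
    [seq z <- s | `|z| < 1].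
  by apply: eq_filter => z /=; rewrite [RHS]lt_neqAle real_leNgt ?normr_real ?real1.
rewrite filter_eq1 filter_lt1 in perm_eq1.
rewrite -perm_gt1 (permPr (perm_cat (perm_crecip_pairs Z) (perm_refl U))) -catA.
by rewrite perm_cat2l -perm_eq1 perm_catC perm_cat2r.
Qed.

End ConjugateReciprocal.

Lemma sign_parity (R : numDomainType) (x : R) (P : nat -> Prop) :
  (forall k, P k -> 0 < (-1) ^+ k * x) -> (x != 0 -> exists k, P k) ->
  ((exists m, P (2 * m)%N) <-> 0 < x) /\ ((exists m, P (2 * m).+1) <-> x < 0).
Proof.
move=> P_sign P_ex; have sign_even m : (-1) ^+ (2 * m) = 1 :> R.
  by rewrite -signr_odd oddM.
have odd_sign k : P k -> odd k = (x < 0).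
  move=> /P_sign; rewrite -signr_odd; case: (odd k) => /=.
    by rewrite mulN1r oppr_gt0 => ->.
  by rewrite mul1r => /lt_gtF ->.
split; split=> [[m /P_sign] | x_sign].
- by rewrite sign_even mul1r.
- have [k Pk] := P_ex (lt0r_neq0 x_sign); exists k./2.
  by have := odd_double_half k; rewrite odd_sign // (lt_gtF x_sign) add0n mul2n => ->.
- by rewrite exprS sign_even mulr1 mulN1r oppr_gt0.
- have [k Pk] := P_ex (ltr0_neq0 x_sign); exists k./2.
  by have := odd_double_half k; rewrite odd_sign // x_sign add1n mul2n => ->.
Qed.

Section CharPoly.
Variables (C : numClosedFieldType) (n : nat) (A : 'M[C]_n).

Local Notation chi := (char_poly A).

Lemma char_poly_prod_XsubC : exists s, chi = prodXsubC s.
Proof.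
have [s ->] := closed_field_poly_normal chi.
by exists s; rewrite (monicP (char_poly_monic A)) scale1r.
Qed.

Lemma prod_roots_char_poly s : chi = prodXsubC s -> \prod_(z <- s) z = \det A.
Proof.
move=> chi_s; have size_s : size s = n.
  by have := size_char_poly A; rewrite chi_s size_prod_XsubC => -[].
have := char_poly_det A; rewrite chi_s coef0_prod_XsubC size_s.
by move/(congr1 (fun x => (-1) ^+ n * x)); rewrite !signrMK.
Qed.

Lemma regular_uniq s : chi = prodXsubC s -> regular A <-> uniq s.
Proof.
move=> chi_s; rewrite /regular chi_s; split => [mu_le1 | uniq_s x].
  apply: count_mem_uniq => x; have := mu_le1 x; rewrite mu_prod_XsubC.
  by rewrite -has_pred1 has_count; case: (count_mem x s) => [|[|]].
by rewrite mu_prod_XsubC count_uniq_mem // leq_b1.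
Qed.

Lemma regular_resultant_neq0 : regular A <-> resultant chi chi^`() != 0.
Proof.
have [s chi_s] := char_poly_prod_XsubC.
by rewrite (regular_uniq chi_s) chi_s resultant_deriv_prod_XsubC_eq0 negbK.
Qed.

Lemma not_regular_resultant_eq0 : ~ regular A <-> resultant chi chi^`() = 0.
Proof.
rewrite regular_resultant_neq0; split=> [/negP /negbNE /eqP // | ->].
by rewrite eqxx.
Qed.

Lemma k_loxodromicP k :
  k_loxodromic A k <->
  exists Z U, [/\ size Z = k, forall z, z \in Z -> z != 0 /\ `|z| != 1,
    forall u, u \in U -> `|u| = 1 & chi = prodXsubC (crecip_pairs Z ++ U)].
Proof.
rewrite /k_loxodromic; split=> [[r [w [U [rw [U1 ->]]]]] | [Z [U [<- Z_lox U1 ->]]]].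
  exists [seq r j * w j | j <- enum 'I_k], U.
  have norm_rw j : `|r j * w j| = r j.
    by have [r_gt0 [_ w1]] := rw j; rewrite normrM w1 mulr1 gtr0_norm.
  split => //; first by rewrite size_map size_enum_ord.
    move=> _ /mapP [j _ ->]; have [r_gt0 [r_neq1 _]] := rw j.
    by rewrite -normr_eq0 norm_rw gt_eqF.
  rewrite big_cat prod_XsubC_crecip_pairs big_map big_enum /=; congr (_ * _).
  apply: eq_bigr => j _; rewrite crecipE norm_rw; have [r_gt0 _] := rw j.
  by rewrite expr2 invfM -mulrA mulKf ?gt_eqF.
have Z_nth (j : 'I_(size Z)) : Z`_j \in Z := mem_nth 0 (ltn_ord j).
exists (fun j : 'I_(size Z) => `|Z`_j|), (fun j => Z`_j / `|Z`_j|), U.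
split => [j | ]; last split => //.
  have [z_neq0 z1] := Z_lox _ (Z_nth j).
  by rewrite normr_gt0 normf_div normr_id divff ?normr_eq0.
rewrite big_cat prod_XsubC_crecip_pairs (big_nth 0) big_mkord /=; congr (_ * _).
apply: eq_bigr => j _; have [z_neq0 _] := Z_lox _ (Z_nth j).
have norm_neq0 : `|Z`_j| != 0 by rewrite normr_eq0.
have -> : `|Z`_j| * (Z`_j / `|Z`_j|) = Z`_j by rewrite mulrC divfK.
by rewrite crecipE; congr (_ * ('X - _%:P)); field.
Qed.

Lemma regular_k_loxodromic_sign : in_SL A ->
  forall k, regular_k_loxodromic A k -> 0 < (-1) ^+ k * resultant chi chi^`().
Proof.
move=> det1 k [reg /k_loxodromicP [Z [U [<- Z_lox U1 chi_s]]]].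
set s := crecip_pairs Z ++ U in chi_s.
have prod_s : \prod_(z <- s) z = 1 by rewrite (prod_roots_char_poly chi_s).
have s_neq0 : 0 \notin s.
  apply/negP => s_0; move: prod_s; rewrite (big_rem 0 s_0) /= mul0r.
  by move/eqP; rewrite eq_sym oner_eq0.
have Z_neq0 : 0 \notin Z by apply/negP => /Z_lox [/eqP].
have uniq_s : uniq s by rewrite -(regular_uniq chi_s).
have res_disc : resultant chi chi^`() = norm_disc s.
  rewrite chi_s resultant_deriv_prod_XsubC //.
  by have := deriv_at_roots_norm_disc s_neq0; rewrite prod_s mulr1 expr1n mul1r.
move/regular_resultant_neq0: reg; rewrite res_disc => disc_neq0.
by rewrite lt_def mulf_neq0 ?signr_eq0 ?norm_disc_crecip_pairs_sign.
Qed.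

Lemma regular_exists_k_loxodromic :
  c_reciprocal chi -> regular A -> exists k, k_loxodromic A k.
Proof.
move=> [_ chi_crecip] reg; have [s chi_s] := char_poly_prod_XsubC.
have root_s z : root chi z = (z \in s) by rewrite chi_s root_prod_XsubC.
have [|||Z [U [perm_s Z_gt1 U1]]] := @crecip_closed_decomposition _ s.
- by rewrite -(regular_uniq chi_s).
- by apply/negP; rewrite -root_s => /chi_crecip [/eqP].
- by move=> z; rewrite -!root_s => /chi_crecip [_ []].
exists (size Z); apply/k_loxodromicP; exists Z, U; split=> //.
  move=> z /Z_gt1 z_gt1; rewrite -normr_eq0 !gt_eqF //.
  exact: lt_trans ltr01 z_gt1.
by rewrite chi_s; apply: perm_big.
Qed.

End CharPoly.

Theorem theorem1p5 (R : realType) (n : nat) (A : 'M[R[i]]_n) :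
  (0 < n)%N -> in_SL A -> c_reciprocal (char_poly A) ->
  [/\ (exists m : nat, regular_k_loxodromic A (2 * m)%N)
        <-> 0 < resultant (char_poly A) (char_poly A)^`(),
      (exists m : nat, regular_k_loxodromic A (2 * m).+1)
        <-> resultant (char_poly A) (char_poly A)^`() < 0
    & ~ regular A <-> resultant (char_poly A) (char_poly A)^`() = 0].
Proof.
move=> _ det1 chi_crecip.
have exists_lox : resultant (char_poly A) (char_poly A)^`() != 0 ->
    exists k, regular_k_loxodromic A k.
  move=> /regular_resultant_neq0 reg.
  by have [k lox] := regular_exists_k_loxodromic chi_crecip reg; exists k.
have [even_pos odd_neg] := sign_parity (regular_k_loxodromic_sign det1) exists_lox.
by split=> //; apply: not_regular_resultant_eq0.
Qed.
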